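(* Let $k\ge1$. For every rational transduction $g:\Sigma^*\rightharpoonup\Lambda^*$ and every $k$-lexicographic transduction $f:\Lambda^*\rightharpoonup\Gamma^*$, the composition $f\circ g$ is $k$-lexicographic.
   Context: A rational transduction is one computed by a functional finite state transducer, i.e. a pair $(A,\mu)$ with: - $A$ a (possibly non-deterministic) finite automaton over $\Sigma$; - $\mu$ assigning an output word in $\Lambda^*$ to each transition; such that all accepting runs on a given input produce the same concatenated output. That common output is the image of the input. Alphabets are finite. For words $u,v$ of equal length over alphabets $\Sigma_1,\Sigma_2$, $u\otimes v$ is the word over $\Sigma_1\times\Sigma_2$ with $(u\otimes v)[i]=(u[i],v[i])$. A transduction is a partial function $f:\Sigma^*\rightharpoonup\Gamma^*$. A simple transduction is a transduction $f=\sum_{i=1}^n L_i\triangleright w_i$, where $L_1,\dots,L_n\subseteq\Sigma^*$ are pairwise disjoint regular languages and each $w_i\in\Gamma^{\le 1}$ is a word of length at most 1. It satisfies $f(u)=w_i$ if $u\in L_i$, and $f(u)$ is undefined if $u\notin\bigcup_iL_i$. An ordered alphabet is a pair $\lambda=(B,\prec)$ with $B$ a finite set and $\prec$ a strict linear order on $B$. The order is extended to $B^n$ for each $n$ by: $u\prec v$ iff there is $i\le n$ with $u[i]\prec v[i]$ and $u[j]=v[j]$ for all $i<j\le n$ (most significant letter on the right). For a transduction $f:(\Sigma\times B)^*\rightharpoonup\Gamma^*$, the transduction $\mathsf{maplex}_\lambda f:\Sigma^*\rightharpoonup\Gamma^*$ maps $u$ to $f(u\otimes b_1)f(u\otimes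 b_2)\cdots f(u\otimes b_m)$, where $b_1\prec\cdots\prec b_m$ is the increasing enumeration of all of $B^{|u|}$. It is defined on $u$ iff every $f(u\otimes b_j)$ is defined. The classes are defined inductively: - $\mathsf{Lex}_0$ is the class of simple transductions; - $\mathsf{Lex}_{k+1}=\{\mathsf{maplex}_\lambda f: \lambda=(B,\prec)\text{ an ordered alphabet},\ f:(\Sigma\times B)^*\rightharpoonup\Gamma^*\text{ in }\mathsf{Lex}_k\}$; - $\mathsf{Lex}=\bigcup_k\mathsf{Lex}_k$, the lexicographic transductions. Elements of $\mathsf{Lex}_k$ are called $k$-lexicographic. *)

From mathcomp Require Import all_boot.
Set Implicit Arguments. Unset Strict Implicit. Unset Printing Implicit Defensive.

(* Words over a finite alphabet S are [seq S]; a transduction is a partial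
   function [seq S -> option (seq G)] ([None] = undefined). *)
Definition transduction (S G : finType) := seq S -> option (seq G).

Record dfa (S : finType) := DFA {
  dstate : finType;
  dinit : dstate;
  dtrans : dstate -> S -> dstate;
  dfinal : pred dstate }.
Arguments dinit {S} d.
Arguments dtrans {S} d _ _.
Arguments dfinal {S} d _.

Definition dfa_accepts (S : finType) (A : dfa S) (u : seq S) : bool :=
  dfinal A (foldl (dtrans A) (dinit A) u).

Definition regular (S : finType) (L : seq S -> Prop) : Prop :=
  exists A : dfa S, forall u, L u <-> dfa_accepts A u.

(* A = (Q, I, F, delta) a non-deterministic automaton, delta ⊆ Q×S×Q given by
   [ttrans], and [tout q a q'] = mu(q,a,q') the output of that transition. *)
Record transducer (S L : finType) := Transducer {
  tstate : finType;
  tinit : pred tstate;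
  tfinal : pred tstate;
  ttrans : tstate -> S -> tstate -> bool;
  tout : tstate -> S -> tstate -> seq L }.
Arguments tinit {S L} t _.
Arguments tfinal {S L} t _.
Arguments ttrans {S L} t _ _ _.
Arguments tout {S L} t _ _ _.

Fixpoint produces (S L : finType) (T : transducer S L) (q : tstate T)
    (u : seq S) (w : seq L) : Prop :=
  match u with
  | [::] => tfinal T q /\ w = [::]
  | a :: u' => exists q' w', ttrans T q a q' /\ @produces S L T q' u' w' /\
                             w = tout T q a q' ++ w'
  end.
Arguments produces {S L} T q u w.

Definition t_accepts (S L : finType) (T : transducer S L) (u : seq S) (w : seq L) :=
  exists q, tinit T q /\ produces T q u w.

Definition functional (S L : finType) (T : transducer S L) : Prop :=
  forall u w1 w2, t_accepts T u w1 -> t_accepts T u w2 -> w1 = w2.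

Definition rational (S L : finType) (g : transduction S L) : Prop :=
  exists T : transducer S L, functional T /\
    forall u w, g u = Some w <-> t_accepts T u w.

Definition simple (S G : finType) (f : transduction S G) : Prop :=
  exists (n : nat) (L : 'I_n -> seq S -> Prop) (w : 'I_n -> seq G),
    (forall i, regular (L i)) /\
    (forall i j u, i != j -> L i u -> L j u -> False) /\
    (forall i, size (w i) <= 1) /\
    (forall u, (forall i, L i u -> f u = Some (w i)) /\
               ((forall i, ~ L i u) -> f u = None)).

Definition strict_linear (B : finType) (prec : rel B) : Prop :=
  [/\ (forall a, ~~ prec a a),
      (forall a b c, prec a b -> prec b c -> prec a c) &
      (forall a b, a != b -> prec a b || prec b a)].

(* u ≺ v on B^n: some position i with u[i] ≺ v[i] and u[j] = v[j] for all j > i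
   (most significant letter on the right). *)
Definition lexlt (B : finType) (prec : rel B) (u v : seq B) : Prop :=
  size u = size v /\
  exists i a b, onth u i = Some a /\ onth v i = Some b /\ prec a b /\
    forall j, i < j -> onth u j = onth v j.

Definition lex_enum (B : finType) (prec : rel B) (n : nat) (s : seq (seq B)) :=
  (forall b, (b \in s) = (size b == n)) /\
  (forall i j, i < j < size s -> lexlt prec (nth [::] s i) (nth [::] s j)).

(* concatenation of a list of partial outputs: defined iff all are defined *)
Definition cat_opt (G : finType) (ws : seq (option (seq G))) : option (seq G) :=
  foldr (fun o acc => obind (fun w => omap (cat w) acc) o) (Some [::]) ws.

Definition is_maplex (S B G : finType) (prec : rel B)
    (f : transduction (S * B)%type G) (g : transduction S G) : Prop :=
  forall u, exists s, lex_enum prec (size u) s /\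
    g u = cat_opt [seq f (zip u b) | b <- s].

Fixpoint lexk (k : nat) : forall (S G : finType), transduction S G -> Prop :=
  match k with
  | 0 => fun S G g => simple g
  | k'.+1 => fun S G g =>
      exists (B : finType) (prec : rel B), strict_linear prec /\
        exists f : transduction (S * B)%type G, lexk k' f /\ is_maplex prec f g
  end.

Definition compose (S L G : finType) (f : transduction L G) (g : transduction S L)
  : transduction S G := fun u => obind f (g u).

(* The induction on k goes through for the stronger closure property of
   "masked" compositions w |-> if P w then [::] else f (h w), with P regular
   and h rational.

   For k = 0 the pieces of the simple transduction pull back along h to regular
   languages.  For the step, let f = maplex_prec f' and let T be a functional
   transducer for h.  Among the accepting runs of T on w, the one whose sequence
   of output lengths is colexicographically least is singled out by a regular
   condition.  The new ordered alphabet consists of blocks: words over B of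
   length at most the longest output of a transition of T, ordered by length
   and then colexicographically.  A block word b over w whose lengths match
   the canonical run is sent, by zipping that run's output v with the
   flattening of b, to v (x) flatten b; this is an order isomorphism onto
   B^|v|.  Masking every other block word, f o h becomes maplex of the masked
   composition of f' with this lifted transducer, to which the induction
   hypothesis applies. *)

From mathcomp Require Import all_boot.
From Stdlib Require Import ClassicalEpsilon.
Set Implicit Arguments. Unset Strict Implicit. Unset Printing Implicit Defensive.

Lemma strict_linearP (B : finType) (r : rel B) : strict_linear r ->
  [/\ irreflexive r, transitive r & forall a b, a != b -> r a b || r b a].
Proof. by case=> irr trans total; split=> // [a|b a c]; [apply/negbTE|apply: trans]. Qed.

Section Colex.
Variables (T : eqType) (r : rel T).

Fixpoint colex (u v : seq T) : bool :=
  match u, v with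
  | a :: u', b :: v' => colex u' v' || (u' == v') && r a b
  | _, _ => false
  end.

Lemma colex_cat u v u' v' : size u = size v ->
  colex (u ++ u') (v ++ v') = colex u' v' || (u' == v') && colex u v.
Proof.
elim: u v => [|a u IH] [|b v] //= Hs; first by rewrite andbF orbF.
case: Hs => Hs; rewrite IH // eqseq_cat //.
by case: (colex u' v'); case: (u' == v'); case: (colex u v); case: (u == v).
Qed.

Hypothesis r_irr : irreflexive r.
Hypothesis r_trans : transitive r.
Hypothesis r_total : forall a b, a != b -> r a b || r b a.

Lemma colex_irr : irreflexive colex.
Proof. by elim=> [|a u IH] //=; rewrite IH r_irr andbF. Qed.

Lemma colex_trans : transitive colex.
Proof.
move=> v u w; elim: u v w => [|a u IH] [|b v] [|c w] //=.
case/orP=> [H1|/andP [/eqP <- H1]] /orP [H2|/andP [/eqP E2 H2]].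
- by rewrite (IH _ _ H1 H2).
- by rewrite -E2 H1.
- by rewrite H2.
- by rewrite E2 eqxx (r_trans H1 H2) orbT.
Qed.

Lemma colex_total u v : size u = size v -> u != v -> colex u v || colex v u.
Proof.
elim: u v => [|a u IH] [|b v] //= [Hs] Hne.
have [Euv|Huv] := eqVneq u v.
  subst v; rewrite colex_irr /=; apply: r_total.
  by apply: contra Hne => /eqP ->.
by rewrite !andFb !orbF; apply: IH.
Qed.

End Colex.

Lemma colexP (B : finType) (r : rel B) u v : reflect (lexlt r u v) (colex r u v).
Proof.
apply: (iffP idP).
  elim: u v => [|a u IH] [|b v] //=.
  case/orP=> [/IH [Hs [i [x [y [Hx [Hy [Hxy Hj]]]]]]]|/andP [/eqP <- H]].
    split; first by rewrite /= Hs.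
    by exists i.+1, x, y; do 3! split => //; case=> [|j] //= /Hj.
  by split=> //; exists 0, a, b; do 3! split => //; case.
elim: u v => [|a u IH] [|b v] [Hs [[|i] [x [y [Hx [Hy [Hxy Hj]]]]]]] //=.
  case: Hx Hy => -> [->]; rewrite Hxy andbT; apply/orP; right.
  by apply/eqP/eq_from_onth => j; apply: (Hj j.+1).
rewrite IH //; split; first by case: Hs.
by exists i, x, y; do 2! split => //; split=> // j Hij; apply: (Hj j.+1).
Qed.

Definition words (B : finType) (n : nat) : seq (seq B) := [seq val t | t : n.-tuple B].

Lemma mem_words (B : finType) n (u : seq B) : (u \in words B n) = (size u == n).
Proof.
apply/mapP/idP => [[t _ ->]|Hu]; first by rewrite size_tuple.
by exists (Tuple Hu); rewrite ?mem_enum.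
Qed.

Lemma uniq_words (B : finType) n : uniq (words B n).
Proof. by rewrite map_inj_uniq ?enum_uniq //; apply: val_inj. Qed.

Lemma sorted_strict (T : eqType) (lt : rel T) (s : seq T) :
  sorted (fun u v => (u == v) || lt u v) s -> uniq s -> sorted lt s.
Proof.
case: s => // a s; elim: s a => [|b s IH] a //= /andP [/orP [/eqP Eab|Hab] Hs] /andP [Ha Hu].
  by move: Ha; rewrite Eab mem_head.
by rewrite Hab; apply: (IH _ Hs Hu).
Qed.

Section LexEnum.
Variables (B : finType) (prec : rel B).
Hypothesis prec_lin : strict_linear prec.

Lemma lex_enumE n s :
  lex_enum prec n s <-> (forall b, (b \in s) = (size b == n)) /\ sorted (colex prec) s.
Proof.
have [_ prec_trans _] := strict_linearP prec_lin.
rewrite sorted_pairwise; last exact: colex_trans.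
split=> -[Hmem Hs]; split=> //.
  by apply/(pairwiseP [::]) => i j Hi Hj Hij; apply/colexP/Hs; rewrite Hij.
move=> i j /andP [Hij Hj]; apply/colexP.
by move/(pairwiseP [::]): Hs; apply=> //; rewrite inE (ltn_trans Hij).
Qed.

Lemma lex_enum_unique n s1 s2 : lex_enum prec n s1 -> lex_enum prec n s2 -> s1 = s2.
Proof.
have [prec_irr prec_trans _] := strict_linearP prec_lin.
move=> /lex_enumE [H1 S1] /lex_enumE [H2 S2].
apply: (irr_sorted_eq (colex_trans prec_trans) (colex_irr prec_irr)) => // b.
by rewrite H1 H2.
Qed.

Lemma lex_enum_exists n : exists s, lex_enum prec n s.
Proof.
have [prec_irr _ prec_total] := strict_linearP prec_lin.
pose le u v := (u == v) || colex prec u v.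
exists (sort le (words B n)); apply/lex_enumE; split.
  by move=> b; rewrite mem_sort mem_words.
apply: sorted_strict; last by rewrite sort_uniq uniq_words.
apply: (sort_sorted_in (P := fun u => size u == n)); last by apply/allP => u; rewrite mem_words.
move=> u v /eqP Hu /eqP Hv; rewrite /le; have [//|Huv] := eqVneq u v.
by apply: colex_total => //; rewrite Hu Hv.
Qed.

End LexEnum.

Lemma eq_regular (S : finType) (L1 L2 : seq S -> Prop) :
  (forall u, L1 u <-> L2 u) -> regular L1 -> regular L2.
Proof. by move=> E [A HA]; exists A => u; rewrite -E. Qed.

Lemma regular_cst (S : finType) (b : bool) : regular (fun _ : seq S => b).
Proof. by exists (@DFA S unit tt (fun _ _ => tt) (fun _ => b)). Qed.

Lemma regularC (S : finType) (L : seq S -> Prop) : regular L -> regular (fun u => ~ L u).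
Proof.
case=> A HA; exists (DFA (dinit A) (dtrans A) (fun q => ~~ dfinal A q)) => u.
by rewrite HA; split=> /negP.
Qed.

Definition prod_dfa (S : finType) (op : bool -> bool -> bool) (A1 A2 : dfa S) : dfa S :=
  @DFA S (dstate A1 * dstate A2)%type (dinit A1, dinit A2)
    (fun p a => (dtrans A1 p.1 a, dtrans A2 p.2 a)) (fun p => op (dfinal A1 p.1) (dfinal A2 p.2)).

Lemma prod_dfaE (S : finType) op (A1 A2 : dfa S) u :
  dfa_accepts (prod_dfa op A1 A2) u = op (dfa_accepts A1 u) (dfa_accepts A2 u).
Proof.
rewrite /dfa_accepts /=; move: (dinit A1) (dinit A2).
by elim: u => [|a u IH] //= q1 q2; rewrite IH.
Qed.

Lemma regularI (S : finType) (L1 L2 : seq S -> Prop) :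
  regular L1 -> regular L2 -> regular (fun u => L1 u /\ L2 u).
Proof.
case=> A1 H1 [A2 H2]; exists (prod_dfa andb A1 A2) => u.
by rewrite prod_dfaE H1 H2; split=> /andP.
Qed.

Lemma regularU (S : finType) (L1 L2 : seq S -> Prop) :
  regular L1 -> regular L2 -> regular (fun u => L1 u \/ L2 u).
Proof.
case=> A1 H1 [A2 H2]; exists (prod_dfa orb A1 A2) => u.
by rewrite prod_dfaE H1 H2; split=> /orP.
Qed.

Lemma regular_map (S S' : finType) (phi : S' -> S) (L : seq S -> Prop) :
  regular L -> regular (fun u => L (map phi u)).
Proof.
case=> A HA; exists (DFA (dinit A) (fun q a => dtrans A q (phi a)) (dfinal A)) => u.
by rewrite HA /dfa_accepts /=; elim: u (dinit A) => /=.
Qed.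

Record nfa (S : finType) := NFA {
  nstate : finType;
  ninit : pred nstate;
  ntrans : nstate -> S -> nstate -> bool;
  nfinal : pred nstate }.
Arguments ninit {S} n _.
Arguments ntrans {S} n _ _ _.
Arguments nfinal {S} n _.

Fixpoint nfa_run (S : finType) (A : nfa S) (q : nstate A) (u : seq S) : bool :=
  if u is a :: u' then [exists q', ntrans A q a q' && nfa_run q' u'] else nfinal A q.

Definition nfa_accepts (S : finType) (A : nfa S) (u : seq S) :=
  [exists q, ninit A q && nfa_run q u].

Lemma regular_nfa (S : finType) (A : nfa S) : regular (nfa_accepts A).
Proof.
pose step (X : {set nstate A}) a := [set q' | [exists q in X, ntrans A q a q']].
exists (DFA [set q | ninit A q] step (fun X => [exists q in X, nfinal A q])).
suff run_step u X : [exists q in foldl step X u, nfinal A q] = [exists q in X, nfa_run q u].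
  move=> u; rewrite /dfa_accepts /= run_step /nfa_accepts.
  by split=> /existsP [q]; rewrite ?inE => Hq; apply/existsP; exists q; rewrite ?inE.
elim: u X => [|a u IH] X //=; rewrite IH.
apply/existsP/existsP => [[q' /andP [/[!inE] /existsP [q /andP [Hq Ht]] Hr]]|].
  by exists q; rewrite Hq; apply/existsP; exists q'; rewrite Ht.
case=> q /andP [Hq /existsP [q' /andP [Ht Hr]]].
by exists q'; rewrite Hr andbT inE; apply/existsP; exists q; rewrite Hq.
Qed.

Lemma regular_zip_exists (S Y : finType) (L : seq (S * Y) -> Prop) :
  regular L -> regular (fun u => exists v : seq Y, size v = size u /\ L (zip u v)).
Proof.
case=> A HA.
pose N := @NFA S (dstate A) (pred1 (dinit A))
  (fun q a q' => [exists y, q' == dtrans A q (a, y)]) (dfinal A).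
apply: eq_regular (regular_nfa N) => u.
suff run_zip q : nfa_run (A := N) q u <->
    exists v : seq Y, size v = size u /\ dfinal A (foldl (dtrans A) q (zip u v)).
  rewrite /nfa_accepts; split.
    by case/existsP=> q /andP [/eqP -> /run_zip [v [Hv Hacc]]]; exists v; rewrite HA.
  case=> v [Hv /HA Hacc]; apply/existsP; exists (dinit A).
  by rewrite /= eqxx; apply/run_zip; exists v.
elim: u q => [|a u IH] q /=.
  split=> [Hq|[v []]]; first by exists [::].
  by case: v.
split=> [/existsP [q' /andP [/existsP [y /eqP ->] /IH [v [Hv Hacc]]]]|[v [Hv Hacc]]].
  by exists (y :: v); rewrite /= Hv.
case: v Hv Hacc => [|y v] // [Hv] Hacc.
apply/existsP; exists (dtrans A q (a, y)); apply/andP.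
by split; [apply/existsP; exists y|apply/IH; exists v].
Qed.

Lemma regular_colex (B : finType) (r : rel B) :
  regular (fun uv : seq (B * B) => colex r (unzip1 uv) (unzip2 uv)).
Proof.
pose step (s : bool * bool) (ab : B * B) :=
  (s.1 && (ab.1 == ab.2), r ab.1 ab.2 || (ab.1 == ab.2) && s.2).
exists (@DFA (B * B)%type (bool * bool)%type (true, false) step snd) => uv.
suff run_colex u v : size u = size v ->
    foldl step (u == v, colex r u v) uv =
    (u ++ unzip1 uv == v ++ unzip2 uv, colex r (u ++ unzip1 uv) (v ++ unzip2 uv)).
  by rewrite /dfa_accepts /= -[(true, false)]/(([::] : seq B) == [::], colex r [::] [::]) run_colex.
elim: uv u v => [|[a b] uv IH] u v Huv /=; first by rewrite !cats0.
have Hcat : size (u ++ [:: a]) = size (v ++ [:: b]) by rewrite !size_cat Huv.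
by rewrite -!cat_rcons -!cats1 -IH // eqseq_cat // colex_cat //= eqseq_cons andbT.
Qed.

Section Preimage.
Variables (S L : finType) (T : transducer S L) (D : dfa L).

Definition preim_nfa : nfa S :=
  @NFA S (tstate T * dstate D)%type
    (fun p => tinit T p.1 && (p.2 == dinit D))
    (fun p a p' => ttrans T p.1 a p'.1 && (p'.2 == foldl (dtrans D) p.2 (tout T p.1 a p'.1)))
    (fun p => tfinal T p.1 && dfinal D p.2).

Lemma preim_nfa_runP u q d :
  nfa_run (A := preim_nfa) (q, d) u <->
  exists o, produces T q u o /\ dfinal D (foldl (dtrans D) d o).
Proof.
elim: u q d => [|a u IH] q d /=.
  by split=> [/andP [Hq Hd]|[o [[Hq ->] Hd]]]; [exists [::]|rewrite Hq].
split=> [/existsP [[q' d'] /andP [/andP [Ht /eqP /= ->] /IH [o [Ho Hd]]]]|].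
  by exists (tout T q a q' ++ o); split; [exists q', o|rewrite foldl_cat].
case=> _ [[q' [o [Ht [Ho ->]]]] Hd].
apply/existsP; exists (q', foldl (dtrans D) d (tout T q a q')).
by rewrite /= Ht eqxx; apply/IH; exists o; rewrite -foldl_cat.
Qed.

Lemma regular_preim_transducer :
  regular (fun u => exists v, t_accepts T u v /\ dfa_accepts D v).
Proof.
apply: eq_regular (regular_nfa preim_nfa) => u; split.
  case/existsP=> [[q d] /andP [/andP [Hq /eqP /= ->] /preim_nfa_runP [o [Ho Hd]]]].
  by exists o; split; first exists q.
case=> v [[q [Hq Hv]] Hd]; apply/existsP; exists (q, dinit D).
by rewrite /= Hq eqxx; apply/preim_nfa_runP; exists v.
Qed.

End Preimage.

Lemma regular_preim_rational (S L : finType) (h : transduction S L) (R : seq L -> Prop) :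
  rational h -> regular R -> regular (fun u => exists v, h u = Some v /\ R v).
Proof.
case=> T [_ HT] [D HD].
apply: eq_regular (regular_preim_transducer T D) => u.
by split=> -[v [Hv HRv]]; exists v; split; by [apply/HT|apply/HD].
Qed.

Definition tfun (S L : finType) (T : transducer S L) : transduction S L :=
  fun u => match excluded_middle_informative (exists w, t_accepts T u w) with
           | left H => Some (proj1_sig (constructive_indefinite_description _ H))
           | right _ => None
           end.

Lemma tfunP (S L : finType) (T : transducer S L) :
  functional T -> forall u w, tfun T u = Some w <-> t_accepts T u w.
Proof.
move=> Tfun u w; rewrite /tfun; case: excluded_middle_informative => [H|H].
  case: constructive_indefinite_description => w' Hw' /=.
  by split=> [[<-]|Hw] //; rewrite (Tfun _ _ _ Hw' Hw).
by split=> // Hw; case: H; exists w.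
Qed.

Lemma rational_tfun (S L : finType) (T : transducer S L) : functional T -> rational (tfun T).
Proof. by move=> Tfun; exists T; split; last exact: tfunP. Qed.

Lemma ex_minimal (T : eqType) (lt : rel T) (s : seq T) (Q : T -> Prop) :
  transitive lt -> irreflexive lt -> (exists2 x, x \in s & Q x) ->
  exists x, [/\ x \in s, Q x & forall y, y \in s -> Q y -> ~~ lt y x].
Proof.
move=> lt_trans lt_irr; elim: s => [|a s IH] [x Hx Qx] //.
have [[y Hy Qy]|NQ] := classic (exists2 y, y \in s & Q y); last first.
  have Qa : Q a by move: Hx; rewrite inE => /predU1P [<- //|Hx]; case: NQ; exists x.
  exists a; split; rewrite ?mem_head // => z /predU1P [-> _|Hz Qz]; first by rewrite lt_irr.
  by case: NQ; exists z.
have [m [Hm Qm m_min]] := IH (ex_intro2 _ _ y Hy Qy).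
have [[Qa lt_am]|Ham] := classic (Q a /\ lt a m).
  exists a; split; rewrite ?mem_head // => z /predU1P [-> _|Hz Qz]; first by rewrite lt_irr.
  by apply: contra (m_min z Hz Qz) => /lt_trans; apply.
exists m; split; rewrite ?inE ?Hm ?orbT // => z /predU1P [-> Qz|]; last exact: m_min.
by apply/negP => lt_am; apply: Ham.
Qed.

Section Shapes.
Variables (X L : finType) (T : transducer X L).

Definition out_bound : nat :=
  \max_(t : tstate T * X * tstate T) size (tout T t.1.1 t.1.2 t.2).

Lemma size_tout_bound q x q' : size (tout T q x q') <= out_bound.
Proof. exact: (leq_bigmax_cond (F := fun t => size (tout T t.1.1 t.1.2 t.2)) (q, x, q')). Qed.

Definition outlen := 'I_out_bound.+1.

Fixpoint shaped_run (q : tstate T) (u : seq X) (p : seq nat) (o : seq L) : Prop :=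
  match u, p with
  | [::], [::] => tfinal T q /\ o = [::]
  | a :: u', n :: p' => exists q' o', [/\ ttrans T q a q', size (tout T q a q') = n,
                                        shaped_run q' u' p' o' & o = tout T q a q' ++ o']
  | _, _ => False
  end.

Lemma shaped_run_produces q u p o : shaped_run q u p o -> produces T q u o.
Proof.
elim: u p q o => [|a u IH] [|n p] q o //= [q' [o' [Ht _ Hr ->]]].
by exists q', o'; split; [|split; [exact: IH Hr|]].
Qed.

Lemma produces_shaped_run q u o : produces T q u o -> exists p, shaped_run q u p o.
Proof.
elim: u q o => [|a u IH] q o /=; first by exists [::].
case=> q' [o' [Ht [/IH [p Hp] ->]]].
by exists (size (tout T q a q') :: p), q', o'.
Qed.

Lemma shaped_run_size q u p o : shaped_run q u p o -> size p = size u /\ size o = sumn p.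
Proof.
elim: u p q o => [|a u IH] [|n p] q o //=; first by case=> _ ->.
case=> q' [o' [_ <- /IH [-> Ho'] ->]].
by rewrite size_cat Ho'.
Qed.

Lemma shaped_run_bound q u p o : shaped_run q u p o -> all (leq^~ out_bound) p.
Proof.
elim: u p q o => [|a u IH] [|n p] q o //= [q' [o' [_ <- /IH -> _]]].
by rewrite size_tout_bound.
Qed.

Definition realizable (up : seq (X * outlen)) : Prop :=
  exists q o, tinit T q /\ shaped_run q (unzip1 up) (map val (unzip2 up)) o.

Definition shape_nfa : nfa (X * outlen)%type :=
  @NFA (X * outlen)%type (tstate T) (tinit T)
    (fun q xn q' => ttrans T q xn.1 q' && (size (tout T q xn.1 q') == xn.2))
    (tfinal T).

Lemma shape_nfa_runP q up :
  nfa_run (A := shape_nfa) q up <-> exists o, shaped_run q (unzip1 up) (map val (unzip2 up)) o.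
Proof.
elim: up q => [|[x n] up IH] q /=; first by split=> [Hq|[o []]]; first exists [::].
split=> [/existsP [q' /andP [/andP [Ht /eqP Hn] /IH [o Ho]]]|[_ [q' [o [Ht Hn Ho _]]]]].
  by exists (tout T q x q' ++ o), q', o.
by apply/existsP; exists q'; rewrite Ht Hn eqxx; apply/IH; exists o.
Qed.

Lemma regular_realizable : regular realizable.
Proof.
apply: eq_regular (regular_nfa shape_nfa) => up; split.
  by case/existsP=> q /andP [Hq /shape_nfa_runP [o Ho]]; exists q, o.
by case=> q [o [Hq Ho]]; apply/existsP; exists q; rewrite /= Hq; apply/shape_nfa_runP; exists o.
Qed.

Definition lt_len : rel outlen := relpre val ltn.

Lemma lt_len_irr : irreflexive lt_len.
Proof. by move=> a; apply: ltnn. Qed.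

Lemma lt_len_trans : transitive lt_len.
Proof. by move=> b a c; apply: ltn_trans. Qed.

Lemma lt_len_total a b : a != b -> lt_len a b || lt_len b a.
Proof. by rewrite /lt_len /= neq_ltn. Qed.

Definition smaller (up : seq (X * outlen)) : Prop :=
  exists p, size p = size up /\ realizable (zip (unzip1 up) p) /\ colex lt_len p (unzip2 up).

Lemma regular_smaller : regular smaller.
Proof.
pose R (z : seq ((X * outlen) * outlen)) :=
  realizable (zip (unzip1 (unzip1 z)) (unzip2 z)) /\ colex lt_len (unzip2 z) (unzip2 (unzip1 z)).
have regR : regular R.
  apply: regularI.
    apply: eq_regular (regular_map (fun t => (t.1.1, t.2)) regular_realizable) => z.
    by rewrite /unzip1 /unzip2 -map_comp zip_map.
  apply: eq_regular (regular_map (fun t => (t.2, t.1.2)) (regular_colex lt_len)) => z.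
  by rewrite /unzip1 /unzip2 -!map_comp.
apply: eq_regular (regular_zip_exists regR) => up.
by split=> -[p [Hp HR]]; exists p; move: HR; rewrite /R unzip1_zip ?unzip2_zip ?Hp.
Qed.

Definition canonical (up : seq (X * outlen)) : Prop := realizable up /\ ~ smaller up.

Lemma regular_canonical : regular canonical.
Proof. exact: regularI regular_realizable (regularC regular_smaller). Qed.

Lemma canonical_unique (w : seq X) (p1 p2 : seq outlen) :
  size p1 = size w -> size p2 = size w ->
  canonical (zip w p1) -> canonical (zip w p2) -> p1 = p2.
Proof.
move=> Hp1 Hp2 [R1 N1] [R2 N2]; apply/eqP/negPn/negP => Hne.
case/orP: (colex_total lt_len_irr lt_len_total (etrans Hp1 (esym Hp2)) Hne) => lt12.
  by apply: N2; exists p1; rewrite size2_zip ?unzip1_zip ?unzip2_zip ?Hp1 ?Hp2.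
by apply: N1; exists p2; rewrite size2_zip ?unzip1_zip ?unzip2_zip ?Hp1 ?Hp2.
Qed.

Lemma canonical_exists (w : seq X) : (exists v, t_accepts T w v) ->
  exists p : seq outlen, size p = size w /\ canonical (zip w p).
Proof.
case=> v [q [Hq /produces_shaped_run [ps Hps]]].
have [Hsz _] := shaped_run_size Hps.
have Hle := shaped_run_bound Hps.
have Hex : exists2 p, p \in words outlen (size w) & realizable (zip w p).
  exists (map inord ps); first by rewrite mem_words size_map Hsz.
  exists q, v; split=> //; rewrite unzip1_zip ?unzip2_zip ?size_map ?Hsz //.
  by rewrite -map_comp map_id_in // => n /(allP Hle) Hn /=; rewrite inordK.
have [m [Hm Rm m_min]] := ex_minimal (colex_trans lt_len_trans) (colex_irr lt_len_irr) Hex.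
have Hms : size m = size w by apply/eqP; rewrite -mem_words.
exists m; split=> //; split=> // [[p [Hp]]].
rewrite unzip1_zip ?unzip2_zip ?Hms // => -[Rp lt_pm].
have : p \in words outlen (size w) by rewrite mem_words Hp size2_zip ?Hms.
by move/m_min/(_ Rp); rewrite lt_pm.
Qed.

End Shapes.

Section Blocks.
Variables (X L B : finType) (T : transducer X L).

Definition blocks : seq (seq B) := flatten [seq words B n | n <- iota 0 (out_bound T).+1].

Lemma mem_blocks u : (u \in blocks) = (size u <= out_bound T).
Proof.
apply/flatten_mapP/idP => [[n]|Hu]; first by rewrite mem_iota mem_words ltnS => Hn /eqP ->.
by exists (size u); rewrite ?mem_iota ?mem_words.
Qed.

Definition block : finType := seq_sub blocks.

Definition nil_block : block := Sub [::] (mem_blocks [::]).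

Definition block_len (b : block) : outlen T := inord (size (val b)).

Lemma block_lenE b : val (block_len b) = size (val b).
Proof. by apply: inordK; rewrite ltnS -mem_blocks; apply: ssvalP. Qed.

Definition lift_transducer : transducer (X * block)%type (L * B)%type :=
  @Transducer (X * block)%type (L * B)%type (tstate T) (tinit T) (tfinal T)
    (fun q xb q' => ttrans T q xb.1 q' && (size (val xb.2) == size (tout T q xb.1 q')))
    (fun q xb q' => zip (tout T q xb.1 q') (val xb.2)).

Lemma lift_produces q wb o :
  produces lift_transducer q wb o <->
  exists o0, shaped_run (T := T) q (unzip1 wb) (map val (map block_len (unzip2 wb))) o0 /\
             o = zip o0 (flatten (map val (unzip2 wb))).
Proof.
elim: wb q o => [|[x b] wb IH] q o /=.
  by split=> [[Hq ->]|[o0 [[Hq ->] ->]]]; first exists [::].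
rewrite block_lenE; split.
  case=> q' [o' [/andP [Ht /eqP Hs] [/IH [o0 [Ho0 ->]] ->]]].
  by exists (tout T q x q' ++ o0); split; [exists q', o0|rewrite zip_cat].
case=> _ [[q' [o0 [Ht Hs Ho0 ->]]] ->].
exists q', (zip o0 (flatten (map val (unzip2 wb)))); rewrite Ht Hs eqxx zip_cat //.
by split=> //; split=> //; apply/IH; exists o0.
Qed.

Lemma lift_accepts (wb : seq (X * block)) o :
  t_accepts lift_transducer wb o ->
  exists2 o0, t_accepts T (unzip1 wb) o0 & o = zip o0 (flatten (map val (unzip2 wb))).
Proof.
case=> q [Hq /lift_produces [o0 [Ho0 ->]]].
by exists o0 => //; exists q; split=> //; apply: shaped_run_produces Ho0.
Qed.

Lemma lift_functional : functional T -> functional lift_transducer.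
Proof.
move=> T_fun wb o1 o2 /lift_accepts [a1 H1 ->] /lift_accepts [a2 H2 ->].
by rewrite (T_fun _ _ _ H1 H2).
Qed.

Section BlockOrder.
Variable prec : rel B.

Definition block_lt : rel block := fun x y =>
  (size (val x) < size (val y)) || (size (val x) == size (val y)) && colex prec (val x) (val y).

Lemma block_lt_linear : strict_linear prec -> strict_linear block_lt.
Proof.
move=> /strict_linearP [prec_irr prec_trans prec_total].
split=> [a|a b c|a b Hab]; rewrite /block_lt.
- by rewrite ltnn (colex_irr prec_irr) andbF.
- case/orP=> [H1|/andP [/eqP -> H1]] /orP [H2|/andP [/eqP E2 H2]].
  + by rewrite (ltn_trans H1 H2).
  + by rewrite -E2 H1.
  + by rewrite H2.
  + by rewrite E2 eqxx (colex_trans prec_trans H1 H2) orbT.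
- case: ltngtP => //= E.
  by apply: colex_total => //; apply: contra Hab => /eqP /val_inj ->.
Qed.

Lemma colex_flatten (x y : seq block) : transitive prec ->
  map block_len x = map block_len y ->
  colex block_lt x y -> colex prec (flatten (map val x)) (flatten (map val y)).
Proof.
move=> prec_trans; elim: x y => [|a x IH] [|b y] //= [Hab Hxy].
have Eab : size (val a) = size (val b) by rewrite -!block_lenE Hab.
rewrite colex_cat // => /orP [/IH -> //|/andP [/eqP <- H]].
move: H; rewrite /block_lt Eab ltnn eqxx /= => H.
by apply/orP; right; rewrite eqxx; exact: H.
Qed.

Lemma lex_enum_flatten n s (sh : seq (outlen T)) :
  strict_linear prec -> size sh = n -> lex_enum block_lt n s ->
  lex_enum prec (sumn (map val sh)) [seq flatten (map val b) | b <- s & map block_len b == sh].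
Proof.
move=> prec_lin Hsh Hs; have [_ prec_trans _] := strict_linearP prec_lin.
have [_ block_lt_trans _] := strict_linearP (block_lt_linear prec_lin).
have [mem_s sorted_s] := proj1 (lex_enumE (block_lt_linear prec_lin) _ _) Hs.
have shape_blocks (b : seq block) : shape (map val b) = map val (map block_len b).
  by rewrite /shape -!map_comp; apply: eq_map => x /=; rewrite block_lenE.
apply/lex_enumE => //; split=> [c|].
  apply/mapP/idP => [[b /[!mem_filter] /andP [/eqP Hb _] ->]|/eqP Hc].
    by rewrite size_flatten shape_blocks Hb.
  pose sh' := map val sh; pose b := map (insubd nil_block) (reshape sh' c).
  have Hshape : shape (reshape sh' c) = sh' by rewrite reshapeKl ?Hc.
  have Hvb : map val b = reshape sh' c.
    rewrite -map_comp map_id_in // => r Hr /=; apply: insubdK; rewrite /= mem_blocks.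
    have : size r \in sh' by rewrite -Hshape; apply: map_f.
    by case/mapP=> m _ ->; rewrite -ltnS; apply: ltn_ord.
  exists b; last by rewrite Hvb reshapeKr ?Hc.
  rewrite mem_filter mem_s size_map size_reshape size_map Hsh eqxx andbT.
  by apply/eqP/(inj_map val_inj); rewrite -shape_blocks Hvb.
apply: (homo_sorted_in (P := fun b => map block_len b == sh)); last 2 first.
- exact: filter_all.
- exact: sorted_filter (colex_trans block_lt_trans) _ _ sorted_s.
move=> x y /eqP Hx /eqP Hy; apply: colex_flatten => //; by rewrite Hx Hy.
Qed.

End BlockOrder.
End Blocks.
Arguments block_len {X L B T} b.

Lemma cat_opt_None (G : finType) (l : seq (option (seq G))) : None \in l -> cat_opt l = None.
Proof. by elim: l => [|[w|] l IH] //= /predU1P [//|/IH ->]. Qed.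

Lemma cat_opt_filter (G : finType) (T : eqType) (F : T -> option (seq G)) (a : pred T) s :
  (forall x, x \in s -> ~~ a x -> F x = Some [::]) ->
  cat_opt (map F s) = cat_opt (map F (filter a s)).
Proof.
elim: s => [|x s IH] //= HF; rewrite IH => [|y Hy]; last by apply: HF; rewrite inE Hy orbT.
by case: ifP => //= /negbT /(HF x (mem_head _ _)) ->; case: (cat_opt _).
Qed.

Definition masked (X L G : finType) (P : pred (seq X)) (f : transduction L G)
    (h : transduction X L) : transduction X G :=
  fun w => if P w then Some [::] else obind f (h w).

Lemma simple_masked (X L G : finType) (P : pred (seq X)) (f : transduction L G)
    (h : transduction X L) :
  regular P -> rational h -> simple f -> simple (masked P f h).
Proof.
move=> regP rat_h [n [Ls [ws [Lreg [Ldisj [wsize Lspec]]]]]].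
pose L' (i : 'I_n.+1) w :=
  if unlift ord0 i is Some i' then ~~ P w /\ exists v, h w = Some v /\ Ls i' v else P w.
pose w' (i : 'I_n.+1) := if unlift ord0 i is Some i' then ws i' else [::].
exists n.+1, L', w'; split; [|split; [|split]].
- move=> i; rewrite /L'; case: (unlift ord0 i) => [i'|] //.
  apply: regularI; last exact: regular_preim_rational.
  by apply: eq_regular (regularC regP) => u; split=> /negP.
- move=> i j w; rewrite /L'.
  case: unliftP => [i' ->|->]; case: unliftP => [j' ->|->] //; last 2 first.
  + by move=> _ [/negP NPw _].
  + by move=> _ Pw [/negP].
  move=> Hij [_ [v1 [Hv1 L1]]] [_ [v2 [Hv2 L2]]].
  move: Hv1; rewrite Hv2 => -[Ev]; subst v2.
  by apply: (Ldisj i' j' v1) => //; apply: contra Hij => /eqP ->.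
- by move=> i; rewrite /w'; case: (unlift ord0 i).
move=> w; rewrite /masked; split.
  move=> i; rewrite /L' /w'; case: (unlift ord0 i) => [i'|-> //].
  by case=> /negbTE -> [v [-> Lv]]; apply: (proj1 (Lspec v)).
move=> NL; have NPw : ~~ P w by apply/negP => Pw; apply: (NL ord0); rewrite /L' unlift_none.
rewrite (negbTE NPw); case Ehw: (h w) => [v|] //=.
apply: (proj2 (Lspec v)) => i Li; apply: (NL (lift ord0 i)).
by rewrite /L' liftK; split=> //; exists v.
Qed.

Section MaskedStep.
Variables (X L G B : finType) (prec : rel B) (T : transducer X L).
Variables (f : transduction (L * B)%type G) (g : transduction L G) (h : transduction X L).
Variable P : pred (seq X).
Hypotheses (prec_lin : strict_linear prec) (T_fun : functional T).
Hypothesis h_spec : forall u v, h u = Some v <-> t_accepts T u v.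
Hypothesis g_maplex : is_maplex prec f g.

Local Notation block := (block B T).

Definition lifted_guard (wb : seq (X * block)) : Prop :=
  P (unzip1 wb) \/
  (exists v, h (unzip1 wb) = Some v) /\ ~ canonical (zip (unzip1 wb) (map block_len (unzip2 wb))).

Lemma regular_lifted_guard : regular P -> regular lifted_guard.
Proof.
have rat_h : rational h by exists T.
have dom_h : regular (fun u => exists v, h u = Some v).
  apply: eq_regular (regular_preim_rational rat_h (regular_cst _ true)) => u.
  by split=> [[v [Hv _]]|[v Hv]]; exists v.
move=> regP; apply: regularU; first exact: (regular_map fst regP).
apply: regularI; first exact: (regular_map fst dom_h).
pose lens (xb : X * block) := (xb.1, block_len xb.2).
apply: eq_regular (regular_map lens (regularC (regular_canonical T))) => wb.
by rewrite /unzip1 /unzip2 -!map_comp zip_map.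
Qed.

Variable P' : pred (seq (X * block)).
Hypothesis P'_spec : forall wb, P' wb <-> lifted_guard wb.

Let f' := masked P' f (tfun (lift_transducer B T)).

Let lift_spec := tfunP (lift_functional (B := B) T_fun).

Lemma masked_guarded w b : size b = size w -> P w -> f' (zip w b) = Some [::].
Proof.
move=> Hb Pw; rewrite /f' /masked; have -> // : P' (zip w b).
by apply/P'_spec; left; rewrite unzip1_zip ?Hb.
Qed.

Lemma masked_undefined w :
  ~~ P w -> h w = None -> f' (zip w (nseq (size w) (nil_block B T))) = None.
Proof.
move=> NPw Ehw; set b := nseq _ _; have Hb : size b = size w by rewrite size_nseq.
rewrite /f' /masked; have -> : P' (zip w b) = false.
  by apply/negbTE/negP => /P'_spec []; rewrite unzip1_zip ?Hb // ?(negbTE NPw) // Ehw => -[[]].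
case E: tfun => [o|] //.
move/lift_spec/lift_accepts: E => [o0]; rewrite unzip1_zip ?Hb // => /h_spec.
by rewrite Ehw.
Qed.

Lemma canonical_run w v (pc : seq (outlen T)) :
  h w = Some v -> size pc = size w -> canonical (zip w pc) ->
  exists q, tinit T q /\ shaped_run q w (map val pc) v.
Proof.
move=> Ehw Hpc [[q [o [Hq Ho]]] _]; move: Ho; rewrite unzip1_zip ?unzip2_zip ?Hpc // => Ho.
have : h w = Some o by apply/h_spec; exists q; split=> //; apply: shaped_run_produces Ho.
by rewrite Ehw => -[Evo]; exists q; rewrite Evo.
Qed.

Section CanonicalShape.
Variables (w : seq X) (v : seq L) (pc : seq (outlen T)).
Hypotheses (NPw : ~~ P w) (Ehw : h w = Some v).
Hypotheses (size_pc : size pc = size w) (pc_canonical : canonical (zip w pc)).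

Lemma masked_invalid b : size b = size w -> map block_len b != pc -> f' (zip w b) = Some [::].
Proof.
move=> Hb Hne; rewrite /f' /masked; have -> // : P' (zip w b).
apply/P'_spec; right; rewrite unzip1_zip ?unzip2_zip ?Hb //; split; first by exists v.
by move=> Cb; case/eqP: Hne; apply: canonical_unique Cb pc_canonical; rewrite ?size_map.
Qed.

Lemma masked_valid b : size b = size w -> map block_len b = pc ->
  f' (zip w b) = f (zip v (flatten (map val b))).
Proof.
move=> Hb Eb; rewrite /f' /masked; have -> : P' (zip w b) = false.
  apply/negbTE/negP => /P'_spec; rewrite /lifted_guard unzip1_zip ?unzip2_zip ?Hb ?Eb //.
  by case=> [|[]//]; apply/negP.
have [q [Hq Hrun]] := canonical_run Ehw size_pc pc_canonical.
suff /lift_spec -> : t_accepts (lift_transducer B T) (zip w b) (zip v (flatten (map val b))) by [].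
exists q; split=> //; apply/lift_produces.
by exists v; rewrite unzip1_zip ?unzip2_zip ?Hb ?Eb.
Qed.

End CanonicalShape.

Lemma masked_maplex : is_maplex (block_lt prec) f' (masked P g h).
Proof.
move=> w; have [s Hs] := lex_enum_exists (block_lt_linear T prec_lin) (size w).
exists s; split=> //.
have size_s b : b \in s -> size b = size w by move=> Hb; apply/eqP; rewrite -(proj1 Hs).
rewrite /masked; case: ifPn => [Pw|NPw].
  rewrite (cat_opt_filter (a := pred0)) ?filter_pred0 // => b /size_s Hb _.
  exact: masked_guarded.
case Ehw: (h w) => [v|] /=; last first.
  symmetry; apply/cat_opt_None/mapP; exists (nseq (size w) (nil_block B T)).
    by rewrite (proj1 Hs) size_nseq.
  by rewrite masked_undefined.
have [pc [size_pc pc_can]] : exists pc : seq (outlen T), size pc = size w /\ canonical (zip w pc).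
  by apply: canonical_exists; exists v; apply/h_spec.
rewrite (cat_opt_filter (a := fun b => map block_len b == pc)); last first.
  by move=> b /size_s Hb; apply: (masked_invalid Ehw size_pc pc_can Hb).
have [q [_ /shaped_run_size [_ size_v]]] := canonical_run Ehw size_pc pc_can.
have [s0 [Hs0 ->]] := g_maplex v; rewrite size_v in Hs0.
rewrite (lex_enum_unique prec_lin Hs0 (lex_enum_flatten prec_lin size_pc Hs)).
rewrite -map_comp; congr cat_opt; apply/eq_in_map => b /[!mem_filter] /andP [/eqP Eb /size_s Hb].
by rewrite (masked_valid NPw Ehw size_pc pc_can Hb Eb).
Qed.

End MaskedStep.

Lemma lexk_masked k : forall (X L G : finType) (P : pred (seq X)) (g : transduction L G)
    (h : transduction X L), regular P -> rational h -> lexk k g -> lexk k (masked P g h).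
Proof.
elim: k => [|k IH] X L G P g h regP rat_h; first exact: simple_masked.
case: rat_h => T [T_fun h_spec] [B [prec [prec_lin [f [lex_f g_maplex]]]]].
have [D HD] := regular_lifted_guard B T_fun h_spec regP.
exists (block B T), (block_lt prec); split; first exact: block_lt_linear.
exists (masked (dfa_accepts D) f (tfun (lift_transducer B T))); split.
  by apply: IH => //; [exists D|apply/rational_tfun/lift_functional].
exact (masked_maplex prec_lin T_fun h_spec g_maplex (fun wb => iff_sym (HD wb))).
Qed.

Theorem mainTheorem18 (k : nat) : 1 <= k ->
  forall (S L G : finType) (g : transduction S L) (f : transduction L G),
    rational g -> lexk k f -> lexk k (compose f g).
Proof.
move=> _ S L G g f rat_g lex_f.
exact: (lexk_masked (regular_cst _ false) rat_g lex_f).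
Qed.
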